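(* Let $n,m,k,l\ge0$ with $n+m=k+l$, and let $w_1,\dots,w_p$, where $p=\min(n,m,k,l)+1$, be the minimal length representatives of the double cosets $(S_k\times S_l)\backslash S_{n+m}/(S_n\times S_m)$. Then $A_{n+m}$, as an $(A_k\otimes A_l,A_n\otimes A_m)$-bimodule (via $\gamma_{k,l}$ on the left and $\gamma_{n,m}$ on the right), is isomorphic to the direct sum of the sub-bimodules of $A_{n+m}$ generated by $Y_{w_1},\dots,Y_{w_p}$.
   Context: $A_j$ is the nilCoxeter algebra: the unital $\mathbb{Q}$-algebra generated by $Y_1,\dots,Y_{j-1}$ with relations $Y_i^2=0$, $Y_iY_r=Y_rY_i$ for $|i-r|>1$, $Y_iY_{i+1}Y_i=Y_{i+1}Y_iY_{i+1}$. For $w\in S_j$ with reduced expression $w=s_{i_1}\cdots s_{i_r}$, $Y_w=Y_{i_1}\cdots Y_{i_r}$ (well defined). $\gamma_{a,b}:A_a\otimes A_b\to A_{a+b}$ is given by $\gamma_{a,b}(Y_i\otimes1)=Y_i$, $\gamma_{a,b}(1\otimes Y_i)=Y_{a+i}$; $S_a\times S_b\subset S_{a+b}$ is the standard Young subgroup. *)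

From HB Require Import structures.
From mathcomp Require Import all_boot all_order all_fingroup all_algebra.
Set Implicit Arguments. Unset Strict Implicit. Unset Printing Implicit Defensive.
Import GRing.Theory.
Local Open Scope ring_scope.

(* Coxeter length of a permutation = number of inversions. *)
Definition len (N : nat) (s : 'S_N) : nat :=
  #|[set p : 'I_N * 'I_N | (p.1 < p.2)%N && (s p.2 < s p.1)%N]|.

(* The nilCoxeter algebra A_N over Q, realized on its standard basis
   {Y_w : w in S_N}: elements are Q-valued functions on S_N. *)
Definition A (N : nat) := {ffun 'S_N -> rat^o}.

Definition Y (N : nat) (w : 'S_N) : A N := [ffun u => (u == w)%:R].

(* Product: Y_u Y_v = Y_{uv} if len(uv) = len u + len v, and 0 otherwise. *)
Definition mulA (N : nat) (x y : A N) : A N :=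
  [ffun w => \sum_(u : 'S_N) \sum_(v : 'S_N | (u * v == w)%g &&
                 (len w == len u + len v)%N) x u * y v].

Definition sumf a b (u : 'S_a) (v : 'S_b) (s : 'I_a + 'I_b) : 'I_a + 'I_b :=
  match s with inl j => inl (u j) | inr j => inr (v j) end.

Definition prodfun a b (u : 'S_a) (v : 'S_b) (i : 'I_(a + b)) : 'I_(a + b) :=
  unsplit (sumf u v (split i)).

Lemma prodfun_inj a b (u : 'S_a) (v : 'S_b) : injective (prodfun u v).
Proof.
move=> i j /(can_inj unsplitK) H; apply: (can_inj splitK).
move: H; rewrite /sumf.
case: (split i) => x; case: (split j) => y // [] /perm_inj -> //.
Qed.

Definition prodperm a b (u : 'S_a) (v : 'S_b) : 'S_(a + b) :=
  perm (@prodfun_inj a b u v).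

(* gamma_{a,b}(Y_u (x) Y_v) = Y_{(u,v)} in A_(a+b), transported to A_N
   along E : a + b = N. *)
Definition gammaY (a b N : nat) (E : (a + b)%N = N) (u : 'S_a) (v : 'S_b) : A N :=
  Y (cast_perm E (prodperm u v)).

Definition young (a b N : nat) (E : (a + b)%N = N) : {set 'S_N} :=
  [set cast_perm E (prodperm p.1 p.2) | p : 'S_a * 'S_b].

Definition dcoset (n m k l N : nat) (En : (n + m)%N = N) (Ek : (k + l)%N = N)
    (w : 'S_N) : {set 'S_N} :=
  [set (u * w * v)%g | u in young Ek, v in young En].

Definition minreps (n m k l N : nat) (En : (n + m)%N = N) (Ek : (k + l)%N = N)
    : {set 'S_N} :=
  [set w : 'S_N | [forall u in dcoset En Ek w, (len w <= len u)%N]].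

(* The sub-(A_k (x) A_l, A_n (x) A_m)-bimodule of A_N generated by x:
   the Q-span of all gamma_{k,l}(a) x gamma_{n,m}(b), which by bilinearity
   is the span over basis elements a = Y_u1 (x) Y_u2, b = Y_v1 (x) Y_v2. *)
Definition subbimod (n m k l N : nat) (En : (n + m)%N = N) (Ek : (k + l)%N = N)
    (x : A N) : {vspace A N} :=
  <<[seq mulA (mulA (gammaY Ek p.1.1 p.1.2) x) (gammaY En p.2.1 p.2.2)
     | p <- enum [set: (('S_k * 'S_l) * ('S_n * 'S_m))%type]]>>%VS.

From Pilot Require Import Defs.
From HB Require Import structures.
From mathcomp Require Import all_boot all_order all_fingroup all_algebra.
From mathcomp Require Import zify.
Set Implicit Arguments. Unset Strict Implicit. Unset Printing Implicit Defensive.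
Local Open Scope group_scope.

(* The minimal double coset representatives in (S_k x S_l) \ S_N / (S_n x S_m) are the
   permutations d that are increasing on the blocks [0,k), [k,N) and whose inverse is
   increasing on [0,n), [n,N): any violation produces an adjacent transposition s of the
   corresponding Young subgroup with len (s * d) < len d or len (d * s) < len d.  Such a d
   is determined by t = #{j < k | d j < n}, an invariant of its double coset which takes
   every value in [k - m, min(k,n)]; this gives the count.  Peeling off transpositions
   writes every x as u * d * v with lengths adding, so Y_x = Y_u Y_d Y_v lies in the
   sub-bimodule generated by Y_d, while that sub-bimodule is spanned by the Y_z with z in
   the double coset of d.  As the double cosets partition S_N, the sum of these
   sub-bimodules is direct and exhausts A_N. *)

Section Length.
Variable N : nat.
Implicit Types (s t x : 'S_N) (i j : 'I_N).

Definition inversions s : {set 'I_N * 'I_N} :=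
  [set p : 'I_N * 'I_N | (p.1 < p.2) && (s p.2 < s p.1)].

Lemma lenE s : len s = #|inversions s|. Proof. by []. Qed.

Lemma perm_ltE s i j :
  (i < j -> s i < s j) -> (j < i -> s j < s i) -> (s i < s j) = (i < j).
Proof.
case: (ltngtP i j) => [_ -> // | _ _ sji | /val_inj -> _ _]; last by rewrite ltnn.
by apply/negbTE; rewrite -leqNgt ltnW ?sji.
Qed.

Lemma len_mul s t :
  (forall i j, i < j -> s j < s i -> t (s j) < t (s i)) ->
  len (s * t) = len s + len t.
Proof.
move=> tK; rewrite !lenE; pose g p : 'I_N * 'I_N := (s^-1 p.1, s^-1 p.2).
have g_inj : injective g by move=> [a b] [c d] [] /perm_inj -> /perm_inj ->.
have -> : inversions (s * t) = inversions s :|: g @: inversions t.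
  apply/setP => -[i j]; rewrite !inE /= !permM; apply/idP/orP.
  - case/andP => ij tsji; case: (ltngtP (s i) (s j)) => [sij | sji |].
    + by right; apply/imsetP; exists (s i, s j); rewrite /g /= ?inE ?sij ?permK.
    + by left; rewrite ij.
    + by move/val_inj/perm_inj => eij; rewrite eij ltnn in ij.
  - case=> [/andP [ij sji] | /imsetP [[a b]]]; first by rewrite ij tK.
    rewrite inE /= => /andP [ab tba] [-> ->]; rewrite !permKV tba andbT.
    case: (ltngtP (s^-1 a) (s^-1 b)) => // [ba | /val_inj/perm_inj eab].
      by have := tK _ _ ba; rewrite !permKV => /(_ ab) /(ltn_trans tba); rewrite ltnn.
    by rewrite eab ltnn in ab.
rewrite cardsU (card_imset _ g_inj).
suff -> : inversions s :&: g @: inversions t = set0 by rewrite cards0 subn0.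
apply/setP => -[i j]; rewrite !inE /= andbC; apply/negbTE/andP.
case=> /imsetP [[a b]]; rewrite inE /= => /andP [ab _] [-> ->].
by rewrite !permKV => /andP [_ /(ltn_trans ab)]; rewrite ltnn.
Qed.

Lemma len_invg s : len s^-1 = len s.
Proof.
pose g p : 'I_N * 'I_N := (s p.2, s p.1).
have g_inj : injective g by move=> [a b] [c d] [] /perm_inj -> /perm_inj ->.
rewrite !lenE; suff -> : inversions s^-1 = g @: inversions s by rewrite card_imset.
apply/setP => -[i j]; rewrite inE /=; apply/idP/imsetP.
- by case/andP => ij sji; exists (s^-1 j, s^-1 i); rewrite ?inE /g /= ?permKV ?sji.
- by case=> -[a b]; rewrite inE /= => /andP [ab sba] [-> ->]; rewrite !permK sba.
Qed.

Lemma len_tperm_mul_lt x (c0 c1 : 'I_N) :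
  c1 = c0.+1 :> nat -> x c1 < x c0 -> len (tperm c0 c1 * x) < len x.
Proof.
move=> c01 xc; set s := tperm c0 c1.
have inv_s i j : i < j -> s j < s i -> i = c0 /\ j = c1.
  by rewrite /s; case: tpermP => [->|->|]; case: tpermP => [->|->|] // *; exfalso; lia.
have s_gt0 : 0 < len s.
  rewrite lenE card_gt0; apply/set0Pn; exists (c0, c1).
  by rewrite inE /= /s tpermL tpermR c01 ltnSn.
have len_x : len x = len s + len (s * x).
  rewrite -len_mul ?mulgA ?tperm2 ?mul1g // => i j /inv_s h /h [-> ->].
  by rewrite !permM !tpermK.
by rewrite len_x -[X in X < _]add0n ltn_add2r.
Qed.

End Length.

Lemma descent (f : nat -> nat) a b :
  a < b -> f b < f a -> exists2 c, a <= c < b & f c.+1 < f c.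
Proof.
elim: b => // b IH; rewrite ltnS leq_eqVlt => /predU1P [<- | ab] fb.
  by exists a; rewrite ?leqnn.
case: (ltnP (f b.+1) (f b)) => [fbb | fbb]; first by exists b; rewrite // ltnSn andbT ltnW.
have [c /andP [ac cb] fc] := IH ab (leq_ltn_trans fbb fb).
by exists c; rewrite // ac ltnS ltnW.
Qed.

Section Blocks.
Variable N : nat.
Implicit Types (s u v x y d : 'S_N) (i j : 'I_N) (b : nat).

Definition young_stab b : {group 'S_N} := 'N([set i : 'I_N | i < b] | 'P)%G.

Lemma young_stabP b s : reflect (forall i, (s i < b) = (i < b)) (s \in young_stab b).
Proof.
apply: (iffP astabsP) => sb i; first by have := sb i; rewrite !inE.
by rewrite !inE /= sb.
Qed.

Lemma tperm_young_stab b i j : (i < b) = (j < b) -> tperm i j \in young_stab b.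
Proof. by move=> ij; apply/young_stabP => c; case: tpermP => [->|->|]. Qed.

Lemma young_stab_lt b s i j : s \in young_stab b -> i < j -> s j < s i -> (i < b) = (j < b).
Proof.
move=> /young_stabP sb ij sji; move: (sb i) (sb j).
by case: (ltnP (s i) b); case: (ltnP (s j) b); case: (ltnP i b); case: (ltnP j b) => //=; lia.
Qed.

Definition block_incr b d :=
  [forall i : 'I_N, forall j : 'I_N, (i < j) ==> ((i < b) == (j < b)) ==> (d i < d j)].

Definition fibre_incr b d := block_incr b d^-1.

Lemma block_incrP b d :
  reflect (forall i j, i < j -> (i < b) = (j < b) -> d i < d j) (block_incr b d).
Proof.
apply: (iffP forallP) => [dP i j ij bij | dP i].
  by have /forallP/(_ j) := dP i; rewrite ij bij eqxx.
by apply/forallP => j; apply/implyP => ij; apply/implyP => /eqP; apply: dP.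
Qed.

Lemma block_incrPn b d :
  ~~ block_incr b d -> exists i j, [/\ i < j, (i < b) = (j < b) & d j < d i].
Proof.
case/forallPn => i /forallPn [j]; rewrite !negb_imply => /and3P [ij /eqP bij dij].
exists i, j; split => //; rewrite ltnNge leq_eqVlt negb_or dij andbT.
by apply: contraTneq ij => /val_inj/perm_inj ->; rewrite ltnn.
Qed.

Lemma block_incr_ltE b d i j :
  block_incr b d -> (i < b) = (j < b) -> (d i < d j) = (i < j).
Proof. by move=> /block_incrP dP bij; apply: perm_ltE => /dP; apply. Qed.

Lemma fibre_incrP b d :
  reflect (forall i j, i < j -> (d i < b) = (d j < b) -> d i < d j) (fibre_incr b d).
Proof.
apply: (iffP idP) => [dP i j ij bij | dP].
  by rewrite -(block_incr_ltE dP bij) !permK.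
apply/block_incrP => c c' cc' bc.
rewrite -(perm_ltE (s := d) (i := d^-1 c) (j := d^-1 c')) ?permKV // => /dP.
by rewrite !permKV bc; apply.
Qed.

Lemma adjacent_descent b x i j :
  i < j -> (i < b) = (j < b) -> x j < x i ->
  exists c0 c1 : 'I_N, [/\ c1 = c0.+1 :> nat, (c0 < b) = (c1 < b) & x c1 < x c0].
Proof.
move=> ij bij xji; pose f c := nat_of_ord (x (insubd i c)).
have [c /andP [ic cj] fc] : exists2 c, i <= c < j & f c.+1 < f c.
  by apply: descent; rewrite // /f !valKd.
have cN : c.+1 < N by apply: leq_ltn_trans (ltn_ord j).
exists (insubd i c), (insubd i c.+1); rewrite !val_insubd cN ltnW //; split => //.
by move: bij; case: (ltnP i b); case: (ltnP j b) => //=; lia.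
Qed.

Lemma not_block_incr_shorter b x : ~~ block_incr b x ->
  exists2 s, s \in young_stab b & len (s * x) < len x.
Proof.
case/block_incrPn => i [j [ij bij xji]].
have [c0 [c1 [c01 bc xc]]] := adjacent_descent ij bij xji.
by exists (tperm c0 c1); [apply: tperm_young_stab | apply: len_tperm_mul_lt].
Qed.

Lemma not_fibre_incr_shorter b x : ~~ fibre_incr b x ->
  exists2 s, s \in young_stab b & len (x * s) < len x.
Proof.
case/not_block_incr_shorter => s sY; rewrite -len_invg invMg invgK len_invg => lt.
by exists s^-1; rewrite ?groupV.
Qed.

Lemma fibre_incr_factor b x : exists y v, [/\ v \in young_stab b, fibre_incr b y & x = y * v].
Proof.
move: {2}(len x).+1 (ltnSn (len x)) => L; elim: L x => // L IH x lx.
have [xP | /not_fibre_incr_shorter [s sY ls]] := boolP (fibre_incr b x).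
  by exists x, 1; rewrite group1 mulg1.
have [y [v [vY yP e]]] := IH (x * s) (leq_trans ls lx).
exists y, (v * s^-1); split => //; first by rewrite groupM ?groupV.
by rewrite mulgA -e mulgK.
Qed.

Lemma block_incr_factor b y : exists u d, [/\ u \in young_stab b, block_incr b d & y = u * d].
Proof.
have [d [v [vY dP e]]] := fibre_incr_factor b y^-1.
by exists v^-1, d^-1; rewrite groupV -invMg -e invgK.
Qed.

Lemma len_young_mul b u d :
  u \in young_stab b -> block_incr b d -> len (u * d) = len u + len d.
Proof.
move=> uY /block_incrP dP; apply: len_mul => i j ij uji; apply: dP => //.
by have /young_stabP ub := uY; rewrite !ub (young_stab_lt uY ij uji).
Qed.

Lemma len_mul_young b y v :
  fibre_incr b y -> v \in young_stab b -> len (y * v) = len y + len v.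
Proof.
by move=> yP vY; rewrite -len_invg invMg (len_young_mul (b := b)) ?groupV // !len_invg addnC.
Qed.

Lemma fibre_incr_young_mul k n u d :
  u \in young_stab k -> block_incr k d -> fibre_incr n (u * d) -> fibre_incr n d.
Proof.
move=> /young_stabP ub /block_incrP dP /fibre_incrP udP; apply/fibre_incrP => i j ij dij.
have [kij | kij] := eqVneq (i < k) (j < k); first exact: dP.
have /andP [ik jk] : (i < k) && ~~ (j < k).
  by move: kij ij; case: (ltnP i k); case: (ltnP j k) => //=; lia.
have uik : u^-1 i < k by rewrite -ub permKV.
have kuj : k <= u^-1 j by rewrite leqNgt -ub permKV.
have uij : u^-1 i < u^-1 j := leq_trans uik kuj.
by have := udP _ _ uij; rewrite !permM !permKV; apply.
Qed.

Lemma double_coset_factor k n x : exists u d v,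
  [/\ u \in young_stab k, v \in young_stab n, block_incr k d, fibre_incr n d &
   [/\ x = u * d * v, len (u * d) = len u + len d & len (u * d * v) = len (u * d) + len v]].
Proof.
have [y [v [vY yP ->]]] := fibre_incr_factor n x.
have [u [d [uY dP yE]]] := block_incr_factor k y.
exists u, d, v; rewrite -yE (len_mul_young yP vY); split => //.
- by apply: fibre_incr_young_mul uY dP _; rewrite -yE.
- by rewrite yE (len_young_mul uY dP).
Qed.

End Blocks.

Section DoubleCosetInvariant.
Variable N : nat.
Implicit Types (u v x d : 'S_N) (i j : 'I_N).

Lemma card_ord_lt t : t <= N -> #|[set i : 'I_N | i < t]| = t.
Proof.
move=> tN; have w_inj : injective (widen_ord tN) by move=> i j [] /ord_inj.
suff -> : [set i : 'I_N | i < t] = widen_ord tN @: setT.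
  by rewrite (card_imset _ w_inj) cardsT card_ord.
apply/setP => i; rewrite inE; apply/idP/imsetP => [it | [j _ ->]]; last by rewrite /= ltn_ord.
by exists (Ordinal it); last apply: val_inj.
Qed.

Lemma card_perm_lt x t : t <= N -> #|[set j | x j < t]| = t.
Proof.
move=> tN; rewrite -[RHS](card_ord_lt tN).
rewrite -(card_preimset [set i : 'I_N | i < t] (@perm_inj _ x)).
by apply: eq_card => j; rewrite !inE.
Qed.

Lemma fibre_incr_ltE b d i j : fibre_incr b d ->
  (d j < d i) = (if (d j < b) == (d i < b) then j < i else d j < b).
Proof.
move=> /fibre_incrP dP; case: eqP => [bij | /eqP].
  by apply: perm_ltE => /dP; apply; rewrite bij.
by case: (ltnP (d j) b); case: (ltnP (d i) b) => //=; lia.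
Qed.

Lemma fibre_incr_inj b d d' : fibre_incr b d -> fibre_incr b d' ->
  (forall j, (d j < b) = (d' j < b)) -> d = d'.
Proof.
move=> dP d'P bdd'; apply/permP => i; apply/val_inj => /=.
rewrite -(card_perm_lt d (ltnW (ltn_ord (d i)))) -(card_perm_lt d' (ltnW (ltn_ord (d' i)))).
by apply: eq_card => j; rewrite !inE (fibre_incr_ltE _ _ dP) (fibre_incr_ltE _ _ d'P) !bdd'.
Qed.

Section DownClosed.
Variable B : pred 'I_N.

Definition downclosed_in (p : pred 'I_N) := forall i j, i <= j -> B i -> B j -> p j -> p i.

Lemma downclosed_card_lt p q j : downclosed_in p -> downclosed_in q ->
  B j -> p j -> ~~ q j -> #|[set i | B i && q i]| < #|[set i | B i && p i]|.
Proof.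
move=> pD qD Bj pj qj; apply: proper_card; apply/properP; split.
  apply/subsetP => i; rewrite !inE => /andP [Bi qi]; rewrite Bi; apply: (pD i j) => //.
  by apply: contraNT qj; rewrite -ltnNge => /ltnW ji; apply: qD ji Bj Bi qi.
by exists j; rewrite !inE Bj ?pj.
Qed.

Lemma downclosed_eq p q : downclosed_in p -> downclosed_in q ->
  #|[set i | B i && p i]| = #|[set i | B i && q i]| -> {in B, p =1 q}.
Proof.
move=> pD qD e j Bj; apply/idP/idP => [pj | qj]; apply/negPn/negP => nq.
- by have := downclosed_card_lt pD qD Bj pj nq; rewrite e ltnn.
- by have := downclosed_card_lt qD pD Bj qj nq; rewrite e ltnn.
Qed.

End DownClosed.

Definition blockcnt k n d (c : bool) := #|[set j : 'I_N | ((j < k) == c) && (d j < n)]|.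

Lemma blockcnt_young_mul k n u x v c :
  u \in young_stab N k -> v \in young_stab N n ->
  blockcnt k n (u * x * v) c = blockcnt k n x c.
Proof.
move=> /young_stabP uk /young_stabP vn; rewrite /blockcnt.
rewrite -(card_preimset [set j : 'I_N | ((j < k) == c) && (x j < n)] (@perm_inj _ u)).
by apply: eq_card => j; rewrite !inE !permM vn uk.
Qed.

Lemma min_rep_uniq k n d d' :
  block_incr k d -> fibre_incr n d -> block_incr k d' -> fibre_incr n d' ->
  (forall c, blockcnt k n d c = blockcnt k n d' c) -> d = d'.
Proof.
move=> dB dF d'B d'F cnt; apply: fibre_incr_inj dF d'F _ => j.
have fibre_down e :
    block_incr k e -> downclosed_in (fun i => (i < k) == (j < k)) (fun i => e i < n).
  move=> /block_incrP eB i i'; rewrite leq_eqVlt => /predU1P [/val_inj -> // | ii'].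
  by move=> /eqP ik /eqP i'k; apply: ltn_trans; apply: eB; rewrite // ik i'k.
apply: (@downclosed_eq (fun i => (i < k) == (j < k)) (fun i => d i < n) (fun i => d' i < n)).
- exact: fibre_down.
- exact: fibre_down.
- exact: cnt.
- by rewrite unfold_in /=.
Qed.

Lemma blockcnt_bounds k n d : k <= N -> n <= N ->
  [/\ blockcnt k n d true + blockcnt k n d false = n,
      blockcnt k n d true <= k & blockcnt k n d false <= N - k].
Proof.
move=> kN nN; split.
- rewrite -[RHS](card_perm_lt d nN) -(cardsID [set j : 'I_N | j < k]).
  by congr (_ + _); apply: eq_card => j; rewrite !inE ?eqb_id ?eqbF_neg andbC.
- rewrite -[X in _ <= X](card_ord_lt kN); apply: subset_leq_card.
  by apply/subsetP => j; rewrite !inE eqb_id => /andP [].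
- apply: (@leq_trans #|~: [set j : 'I_N | j < k]|).
    by apply/subset_leq_card/subsetP => j; rewrite !inE eqbF_neg => /andP [].
  by rewrite -(leq_add2l k) subnKC // -[X in X + _](card_ord_lt kN) cardsC card_ord.
Qed.

End DoubleCosetInvariant.

Section YoungSubgroup.
Variables a b : nat.

Lemma prodperm_lt (u : 'S_a) (v : 'S_b) i : (prodperm u v i < a) = (i < a).
Proof.
rewrite permE /prodfun; case: (splitP i) => j _ /=; first exact: ltn_ord.
by rewrite ltnNge leq_addr.
Qed.

Lemma prodperm_onto (s : 'S_(a + b)) :
  (forall i, (s i < a) = (i < a)) -> exists u v, s = prodperm u v.
Proof.
move=> sa.
have lo j : s (lshift b j) < a by rewrite sa /= ltn_ord.
have hi j : a <= s (rshift a j) by rewrite leqNgt sa /= ltnNge leq_addr.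
have hi' j : s (rshift a j) - a < b.
  by rewrite ltn_subLR ?hi // ltn_ord.
have u_inj : injective (fun j => Ordinal (lo j)).
  by move=> j j' [] /val_inj/perm_inj/lshift_inj.
have v_inj : injective (fun j => Ordinal (hi' j)).
  move=> j j' [] /(congr1 (addn a)); rewrite !subnKC ?hi //.
  by move/val_inj/perm_inj/rshift_inj.
exists (perm u_inj), (perm v_inj); apply/permP => i; apply/val_inj.
rewrite [in RHS]permE /prodfun; case: splitP => j ij; rewrite /= permE /=.
  by congr (nat_of_ord (s _)); apply: val_inj.
by rewrite subnKC ?hi //; congr (nat_of_ord (s _)); apply: val_inj.
Qed.

End YoungSubgroup.

Lemma youngE a b N (E : (a + b)%N = N) : young E = young_stab N a.
Proof.
case: N / E; apply/setP => s; apply/imsetP/young_stabP => [[[u v] _ ->] i | sa].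
  by rewrite cast_perm_id prodperm_lt.
by have [u [v ->]] := prodperm_onto sa; exists (u, v); rewrite ?cast_perm_id.
Qed.

Section CanonicalRep.
Variables n m k l N t : nat.
Hypotheses (En : (n + m)%N = N) (Ek : (k + l)%N = N).
Hypotheses (t_lo : k - m <= t) (t_hi : t <= minn k n).

(* Maps [0,t), [t,k), [k,k+n-t), [k+n-t,N) increasingly onto [0,t), [n,n+k-t), [t,n),
   [n+k-t,N); this is the representative with blockcnt t. *)
Definition canon_fun (i : nat) : nat :=
  if i < k then (if i < t then i else n + i - t)
  else (if i < k + n - t then t + i - k else i).

Ltac canon_lia := rewrite /canon_fun; repeat case: ifP; lia.

Lemma canon_fun_lt i : i < N -> canon_fun i < N.
Proof. canon_lia. Qed.

Lemma canon_fun_inj i j : i < N -> j < N -> canon_fun i = canon_fun j -> i = j.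
Proof. canon_lia. Qed.

Lemma canon_fun_block i j : i < j -> (i < k) = (j < k) -> canon_fun i < canon_fun j.
Proof. canon_lia. Qed.

Lemma canon_fun_fibre i j :
  i < j -> (canon_fun i < n) = (canon_fun j < n) -> canon_fun i < canon_fun j.
Proof. canon_lia. Qed.

Lemma canon_fun_cnt i : (i < k) && (canon_fun i < n) = (i < t).
Proof. canon_lia. Qed.

Lemma min_rep_of_blockcnt :
  exists d : 'S_N, [/\ block_incr k d, fibre_incr n d & blockcnt k n d true = t].
Proof.
have lt_N (i : 'I_N) : canon_fun i < N by apply: canon_fun_lt.
have d_inj : injective (fun i : 'I_N => Ordinal (lt_N i)).
  by move=> i j [] /canon_fun_inj; move/(_ (ltn_ord i) (ltn_ord j))/val_inj.
exists (perm d_inj); split.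
- by apply/block_incrP => i j ij kij; rewrite !permE canon_fun_block.
- by apply/fibre_incrP => i j ij; rewrite !permE; apply: canon_fun_fibre.
- have tN : t <= N by move: t_hi; lia.
  rewrite /blockcnt -[RHS](card_ord_lt tN); apply: eq_card => i.
  by rewrite !inE permE /= eqb_id canon_fun_cnt.
Qed.

End CanonicalRep.

Section MinimalRepresentatives.
Variables n m k l N : nat.
Hypotheses (En : (n + m)%N = N) (Ek : (k + l)%N = N).
Implicit Types w x : 'S_N.

Lemma dcosetE w :
  dcoset En Ek w = [set u * w * v | u in young_stab N k, v in young_stab N n].
Proof. by rewrite /dcoset !youngE. Qed.

Lemma minrepsP w : (w \in minreps En Ek) = block_incr k w && fibre_incr n w.
Proof.
rewrite inE dcosetE; apply/forall_inP/andP => [wmin | [wB wF] z].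
  split; apply: contraT.
  - case/not_block_incr_shorter => s sY; rewrite ltnNge wmin //.
    by apply/imset2P; exists s 1; rewrite ?mulg1.
  - case/not_fibre_incr_shorter => s sY; rewrite ltnNge wmin //.
    by apply/imset2P; exists 1 s; rewrite ?mul1g.
case/imset2P => u v uY vY ->.
have [u' [d [v' [uY' vY' dB dF [ze l1 l2]]]]] := double_coset_factor k n (u * w * v).
have dw : d = w.
  apply: (min_rep_uniq dB dF wB wF) => c.
  by rewrite -(blockcnt_young_mul d c uY' vY') -ze blockcnt_young_mul.
by rewrite ze l2 l1 dw addnAC leq_addl.
Qed.

Lemma minreps_dcoset_uniq w w' x : w \in minreps En Ek -> w' \in minreps En Ek ->
  x \in dcoset En Ek w -> x \in dcoset En Ek w' -> w = w'.
Proof.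
rewrite !minrepsP !dcosetE => /andP [wB wF] /andP [w'B w'F].
case/imset2P => u v uY vY -> /imset2P [u' v' uY' vY' e].
apply: (min_rep_uniq wB wF w'B w'F) => c.
by rewrite -(blockcnt_young_mul w c uY vY) e blockcnt_young_mul.
Qed.

Lemma card_minreps : #|minreps En Ek| = (minn (minn n m) (minn k l)).+1.
Proof.
set p := minn (minn n m) (minn k l).
have kN : k <= N by rewrite -Ek leq_addr.
have nN : n <= N by rewrite -En leq_addr.
pose t (d : 'S_N) := blockcnt k n d true.
have t_range (d : 'S_N) : k - m <= t d <= minn k n.
  by case: (blockcnt_bounds d kN nN); rewrite /t; lia.
pose rho (d : 'S_N) : 'I_p.+1 := inord (t d - (k - m)).
have rhoK d : rho d = t d - (k - m) :> nat.
  by rewrite inordK // ltnS; have := t_range d; lia.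
have rho_inj : {in minreps En Ek &, injective rho}.
  move=> d d'; rewrite !minrepsP => /andP [dB dF] /andP [d'B d'F] /(congr1 val).
  rewrite /= !rhoK => e; apply: (min_rep_uniq dB dF d'B d'F) => c.
  have := t_range d; have := t_range d'.
  by case: (blockcnt_bounds d kN nN); case: (blockcnt_bounds d' kN nN); case: c;
    rewrite /t in e *; lia.
have rho_onto : rho @: minreps En Ek = [set: 'I_p.+1].
  apply/setP => i; rewrite inE; apply/imsetP.
  have t_lo : k - m <= i + (k - m) by rewrite leq_addl.
  have t_hi : i + (k - m) <= minn k n by have := ltn_ord i; lia.
  have [d [dB dF dt]] := min_rep_of_blockcnt En Ek t_lo t_hi.
  by exists d; [rewrite minrepsP dB dF | apply: val_inj; rewrite /= rhoK /t dt addnK].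
by rewrite -(card_in_imset rho_inj) rho_onto cardsT card_ord.
Qed.

End MinimalRepresentatives.

Import GRing.Theory.
Local Open Scope ring_scope.

Section NilCoxeterBasis.
Variable N : nat.

Lemma YE (w x : 'S_N) : Y w x = (x == w)%:R.
Proof. by rewrite ffunE. Qed.

Lemma mulY (a b : 'S_N) :
  Defs.mulA (Y a) (Y b) = if len (a * b)%g == (len a + len b)%N then Y (a * b)%g else 0.
Proof.
apply/ffunP => w; rewrite ffunE (bigD1 a) //= [X in _ + X]big1 ?addr0; last first.
  by move=> u ua; apply: big1 => v _; rewrite YE (negbTE ua) mul0r.
rewrite YE eqxx -[true%:R]/(1 : rat^o).
rewrite big_mkcond (bigD1 b) //= [X in _ + X]big1 ?addr0; last first.
  by move=> v vb; rewrite YE (negbTE vb) if_same.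
rewrite YE eqxx; case: (eqVneq (a * b)%g w) => [<- | abw] /=.
  by case: ifP => _; rewrite ?ffunE ?YE ?eqxx.
by case: ifP => _; rewrite ?ffunE ?YE // eq_sym (negbTE abw).
Qed.

Lemma mul0A (y : A N) : Defs.mulA 0 y = 0.
Proof.
apply/ffunP => w; rewrite !ffunE big1 // => u _.
by rewrite big1 // => v _; rewrite ffunE mul0r.
Qed.

Lemma A_sumY (f : A N) : f = \sum_x f x *: Y x.
Proof.
apply/ffunP => w; rewrite sum_ffunE (bigD1 w) //= [X in _ + X]big1 ?addr0.
  by rewrite ffunE YE eqxx; exact: (esym (mulr1 _)).
by move=> x xw; rewrite ffunE YE eq_sym (negbTE xw); exact: (mulr0 _).
Qed.

End NilCoxeterBasis.

Lemma gammaY_young a b N (E : (a + b)%N = N) (u : 'S_a) (v : 'S_b) :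
  exists2 s, s \in young_stab N a & gammaY E u v = Y s.
Proof.
exists (cast_perm E (prodperm u v)) => //.
by rewrite -(youngE E); apply/imsetP; exists (u, v).
Qed.

Section Bimodule.
Variables n m k l N : nat.
Hypotheses (En : (n + m)%N = N) (Ek : (k + l)%N = N).

Lemma subbimod_supp_dcoset w f x : f \in subbimod En Ek (Y w) ->
  x \notin dcoset En Ek w -> f x = 0.
Proof.
rewrite dcosetE => fS xD; move: fS; rewrite /subbimod; set gens := [seq _ | _ <- _] => fS.
have gens0 g : g \in gens -> g x = 0.
  case/mapP => -[[a1 a2] [b1 b2]] _ ->.
  have [u uY ->] := gammaY_young Ek a1 a2; have [v vY ->] := gammaY_young En b1 b2.
  rewrite mulY; case: ifP => _; last by rewrite mul0A ffunE.
  rewrite mulY; case: ifP => _; last by rewrite ffunE.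
  rewrite YE; case: eqP => // xE.
  by case/negP: xD; rewrite xE; apply/imset2P; exists u v.
rewrite (coord_span (X := in_tuple gens) fS) sum_ffunE big1 // => i _.
by rewrite ffunE gens0 ?scaler0 //; apply: mem_nth.
Qed.

Lemma Y_in_sum_subbimod x : Y x \in (\sum_(w in minreps En Ek) subbimod En Ek (Y w))%VS.
Proof.
have [u [d [v [uY vY dB dF [xE l1 l2]]]]] := double_coset_factor k n x.
have dmin : d \in minreps En Ek by rewrite minrepsP dB dF.
apply: subvP (sumv_sup d dmin (subvv _)) _ _.
rewrite -(youngE Ek) in uY; rewrite -(youngE En) in vY.
case/imsetP: uY => -[a1 a2] _ uE; case/imsetP: vY => -[b1 b2] _ vE.
apply: memv_span; apply/mapP; exists ((a1, a2), (b1, b2)); first by rewrite mem_enum inE.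
by rewrite /gammaY /= -uE -vE mulY l1 eqxx mulY l2 eqxx xE.
Qed.

Lemma sum_subbimod_full :
  (\sum_(w in minreps En Ek) subbimod En Ek (Y w))%VS = fullv.
Proof.
apply/eqP; rewrite eqEsubv subvf /=; apply/subvP => f _.
by rewrite (A_sumY f); apply: memv_suml => x _; apply/memvZ/Y_in_sum_subbimod.
Qed.

Lemma sum_subbimod_direct :
  directv (\sum_(w in minreps En Ek) subbimod En Ek (Y w)).
Proof.
apply/directv_sum_independent => fs fsS fs0 w wmin; apply/ffunP => x; rewrite ffunE.
have [xD | /(subbimod_supp_dcoset (fsS w wmin)) //] := boolP (x \in dcoset En Ek w).
have /ffunP/(_ x) := fs0; rewrite sum_ffunE ffunE (bigD1 w) //= big1 ?addr0 //.
move=> w' /andP [w'min w'w]; apply: (subbimod_supp_dcoset (fsS w' w'min)).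
by apply: contra w'w => xD'; rewrite (minreps_dcoset_uniq w'min wmin xD' xD).
Qed.

End Bimodule.

Theorem mainTheorem15 (n m k l : nat) (E : (k + l)%N = (n + m)%N) :
  #|minreps (erefl (n + m)%N) E| = (minn (minn n m) (minn k l)).+1 /\
  (\sum_(w in minreps (erefl (n + m)%N) E)
      subbimod (erefl (n + m)%N) E (Y w))%VS = fullv /\
  directv (\sum_(w in minreps (erefl (n + m)%N) E)
      subbimod (erefl (n + m)%N) E (Y w))%VS.
Proof.
split; first exact: card_minreps.
by split; [apply: sum_subbimod_full | apply: sum_subbimod_direct].
Qed.
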